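(* Let $n$ and $r$ be positive integers with $n\geq (r^2+r)/2$. Then $b(\mathrm{S}_{n,r})=\left\lceil\frac{2n-2}{r+1}\right\rceil$.
   Context: $\mathrm{S}_{n,r}$ denotes the symmetric group $\mathrm{S}_n$ acting naturally on the set of $r$-element subsets of $[n]=\{1,\dots,n\}$. For a permutation group $G$ on a set $\Omega$, $b(G)$ is the minimum size of a subset of $\Omega$ whose pointwise stabiliser in $G$ is trivial. *)

From mathcomp Require Import all_boot all_fingroup.
Set Implicit Arguments. Unset Strict Implicit. Unset Printing Implicit Defensive.
Local Open Scope group_scope.

(* The symmetric group S_n = {perm 'I_n} acting on subsets of [n] = 'I_n
   via the natural set action 'P^* (A |-> p @: A).  S_{n,r} is this action
   restricted to r-element subsets. *)

Definition is_base_Snr (n r : nat) (B : {set {set 'I_n}}) : Prop :=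
  (forall A, A \in B -> #|A| = r) /\
  'C(B | ('P^*)%act) = 1%g.

(* A base B separates points: if x and y lay in the same blocks of B, the
   transposition (x y) would fix every block.  So at most one point lies in
   no block, at most #|B| points lie in exactly one, and double counting the
   incidences gives 2n <= #|B| (r + 1) + 2.
   Conversely, n distinct subsets S_x of a k-set in which every point lies in
   exactly r of them give the base {x | v \in S_x}, v in the k-set.  Such an
   r-regular family is reached from the empty set, the k singletons and
   n - 1 - k pairs by replacing one set at a time so as to move the degrees
   towards r; r (r + 1) <= 2n leaves room for each replacement. *)

From mathcomp Require Import all_boot all_fingroup.
From mathcomp Require Import zify.

Set Implicit Arguments. Unset Strict Implicit. Unset Printing Implicit Defensive.

Lemma ltn_sum (I : finType) (f g : I -> nat) j :
  (forall i, f i <= g i) -> f j < g j -> \sum_i f i < \sum_i g i.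
Proof.
move=> le_fg lt_fg; rewrite (bigD1 j) // [X in _ < X](bigD1 j) //=.
by rewrite -addSn leq_add // leq_sum.
Qed.

Lemma sum_nat_eq_shift (I : finType) (f g : I -> nat) (u v : I) :
  (forall i, f i + (i == v) = g i + (i == u)) -> \sum_i f i = \sum_i g i.
Proof.
have sum_eq1 (w : I) : \sum_i (i == w : nat) = 1.
  by rewrite (bigD1 w) //= eqxx big1 // => i /negbTE ->.
move=> fg; apply/eqP; rewrite -(eqn_add2r 1) -{1}(sum_eq1 v) -(sum_eq1 u).
by rewrite -!big_split; apply/eqP/eq_bigr => i _.
Qed.

Lemma subset_of_card (T : finType) (A : {set T}) m :
  m <= #|A| -> exists2 P : {set T}, P \subset A & #|P| = m.
Proof.
move=> le_mA; exists [set X in take m (enum A)].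
  by apply/subsetP => X; rewrite inE => /mem_take; rewrite mem_enum.
rewrite cardsE (card_uniqP _) ?take_uniq ?enum_uniq //.
by rewrite size_takel // -cardE.
Qed.

Lemma exists_notin_imset (T : finType) (A B S : {set T}) (h : T -> T) :
  {in A &, injective h} -> {in A, forall X, h X \in B} ->
  #|S :&: B| < #|A| -> exists2 X, X \in A & h X \notin S.
Proof.
move=> inj_h hAB ltSA.
have [/exists_inP // | ] := boolP [exists X in A, h X \notin S].
rewrite negb_exists_in => /forall_inP hA_S; move: ltSA.
rewrite ltnNge -(card_in_imset inj_h) subset_leq_card //.
apply/subsetP => _ /imsetP [X XA ->]; rewrite inE hAB // andbT.
by have := hA_S X XA; rewrite negbK.
Qed.

Lemma tperm_imset_id (T : finType) (x y : T) (A : {set T}) :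
  (x \in A) = (y \in A) -> tperm x y @: A = A.
Proof.
move=> xyA; rewrite -preim_permV tpermV; apply/setP => z; rewrite inE.
by case: tpermP => // ->.
Qed.

Section Stars.
Variable T : finType.
Implicit Types (S : {set {set T}}) (X Y : {set T}).

Definition star S (x : T) := [set X in S | x \in X].

Lemma card_star S x : #|star S x| = \sum_(X in S) (x \in X : nat).
Proof. by rewrite -sum1dep_card big_mkcondr. Qed.

Lemma sum_card_star S : \sum_x #|star S x| = \sum_(X in S) #|X|.
Proof.
rewrite (eq_bigr _ (fun x _ => card_star S x)) exchange_big.
by apply: eq_bigr => X _; rewrite -sum1_card [RHS]big_mkcond.
Qed.

Lemma star_inj_of_astab S : ('C(S | 'P^*))%g = 1%g -> injective (star S).
Proof.
move=> C1 x y eq_xy; apply/eqP/negPn/negP => neq_xy.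
have : tperm x y \in ('C(S | 'P^*))%g.
  apply/astabP => A SA /=; apply: tperm_imset_id.
  by have /setP/(_ A) := eq_xy; rewrite !inE SA.
rewrite C1 inE => /eqP/permP/(_ x); rewrite perm1 tpermL => /eqP.
by rewrite eq_sym (negbTE neq_xy).
Qed.

Section Separating.
Variable S : {set {set T}}.
Hypothesis star_inj : injective (star S).

Lemma card_star_eq0 : #|[set x | star S x == set0]| <= 1.
Proof.
rewrite -(card_imset _ star_inj) -(cards1 (@set0 {set T})) subset_leq_card //.
apply/subsetP => Z /imsetP [x]; rewrite inE => /eqP s0 ->.
by rewrite s0 inE.
Qed.

Lemma card_star_eq1 : #|[set x | #|star S x| == 1]| <= #|S|.
Proof.
rewrite -(card_imset _ star_inj).
apply: leq_trans (leq_imset_card (fun X => [set X]) S); apply: subset_leq_card.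
apply/subsetP => Z /imsetP [x]; rewrite inE => /cards1P [X sX] ->.
rewrite sX imset_f //.
by have := set11 X; rewrite -sX inE => /andP [].
Qed.

Lemma separating_card_bound : 2 * #|T| <= \sum_(X in S) #|X| + #|S| + 2.
Proof.
have sum_bool (P : pred T) : \sum_x (P x : nat) = #|[set x | P x]|.
  by rewrite -sum1dep_card [RHS]big_mkcond.
have two_le x :
    2 <= #|star S x| + 2 * (star S x == set0) + (#|star S x| == 1).
  have [/cards0_eq -> | pos] := posnP #|star S x|; first by rewrite eqxx cards0.
  by have [-> | ne1] := eqVneq #|star S x| 1; lia.
have : \sum_(x : T) 2 <= \sum_x #|star S x|
    + \sum_x 2 * (star S x == set0) + \sum_x (#|star S x| == 1 : nat).
  by rewrite -!big_split; apply: leq_sum => x _; exact: two_le.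
rewrite -big_distrr !sum_bool sum_card_star sum_nat_const.
rewrite mulnC => /leq_trans; apply.
rewrite -addnA -(addnA (\sum_(X in S) _)) leq_add2l addnC.
apply: leq_add; first exact: card_star_eq1.
exact: leq_mul (leqnn 2) card_star_eq0.
Qed.

End Separating.

Lemma card_replace S X Y : X \in S -> Y \notin S -> #|Y |: (S :\ X)| = #|S|.
Proof.
by move=> SX SY; rewrite cardsU1 (cardsD1 X S) SX !inE (negbTE SY) andbF.
Qed.

Lemma card_star_replace S X Y x : X \in S -> Y \notin S ->
  #|star (Y |: (S :\ X)) x| + (x \in X) = #|star S x| + (x \in Y).
Proof.
move=> SX SY; rewrite !card_star big_setU1 /=; last by rewrite !inE (negbTE SY) andbF.
by rewrite [in RHS](big_setD1 X) //= addnAC [RHS]addnAC (addnC (x \in Y)).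
Qed.

Lemma exchange_step S u v : #|star S u| < #|star S v| ->
  exists2 S' : {set {set T}}, #|S'| = #|S| &
    forall x, #|star S' x| + (x == v) = #|star S x| + (x == u).
Proof.
move=> lt_uv; have neq_vu : v != u by apply: contraTneq lt_uv => ->; rewrite ltnn.
pose h X := u |: (X :\ v).
have memD X : (X \in star S v :\: star S u) = [&& X \in S, v \in X & u \notin X].
  by rewrite !inE; case: (X \in S); case: (u \in X); rewrite /= ?andbT ?andbF.
have inj_h : {in star S v :\: star S u &, injective h}.
  move=> X Y; rewrite !memD => /and3P [_ vX uX] /and3P [_ vY uY] /setP eqXY.
  apply/setP => z; have [-> | zu] := eqVneq z u.
    by rewrite (negbTE uX) (negbTE uY).
  have [-> | zv] := eqVneq z v; first by rewrite vX vY.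
  by have := eqXY z; rewrite !inE (negbTE zu) zv.
pose B := [set Z : {set T} | (u \in Z) && (v \notin Z)].
have hB : {in star S v :\: star S u, forall X, h X \in B}.
  by move=> X _; rewrite !inE eqxx eq_sym (negbTE neq_vu) eqxx.
have SB : S :&: B = star S u :\: star S v.
  apply/setP => Z; rewrite !inE.
  by case: (Z \in S); case: (v \in Z); rewrite /= ?andbT ?andbF.
have lt_card : #|S :&: B| < #|star S v :\: star S u|.
  move: lt_uv; rewrite SB -(cardsID (star S v) (star S u)).
  by rewrite -(cardsID (star S u) (star S v)) setIC ltn_add2l.
have [X0] := exists_notin_imset inj_h hB lt_card.
rewrite memD => /and3P [SX0 vX0 uX0] hX0S.
exists (h X0 |: (S :\ X0)); first exact: card_replace.
move=> x; have := card_star_replace x SX0 hX0S; rewrite !inE.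
have [-> | xv] := eqVneq x v; first by rewrite vX0 (negbTE neq_vu).
have [-> | xu] := eqVneq x u; first by rewrite (negbTE uX0).
by rewrite /= !addn0 => /addIn.
Qed.

Lemma augment_step S v : 2 * #|star S v| < #|S| ->
  exists2 S' : {set {set T}}, #|S'| = #|S| &
    forall x, #|star S' x| = #|star S x| + (x == v).
Proof.
move=> lt_vS; pose h X := v |: X.
have memD X : (X \in S :\: star S v) = (X \in S) && (v \notin X).
  by rewrite !inE; case: (X \in S); rewrite /= ?andbT.
have inj_h : {in S :\: star S v &, injective h}.
  move=> X Y; rewrite !memD => /andP [_ vX] /andP [_ vY] eqXY.
  by rewrite -(setU1K vX) -(setU1K vY); congr (_ :\ v).
pose B := [set Z : {set T} | v \in Z].
have hB : {in S :\: star S v, forall X, h X \in B} by move=> X _; rewrite !inE eqxx.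
have lt_card : #|S :&: B| < #|S :\: star S v|.
  have -> : S :&: B = star S v by apply/setP => Z; rewrite !inE.
  rewrite cardsDS; first lia.
  by apply/subsetP => X; rewrite inE => /andP [].
have [X0] := exists_notin_imset inj_h hB lt_card.
rewrite memD => /andP [SX0 vX0] hX0S.
exists (h X0 |: (S :\ X0)); first exact: card_replace.
move=> x; have := card_star_replace x SX0 hX0S; rewrite !inE.
have [-> | xv] := eqVneq x v; first by rewrite (negbTE vX0) addn0.
by rewrite /= addn0 => /addIn.
Qed.

End Stars.

Section Regularization.
Variables (V : finType) (r : nat).
Implicit Types S : {set {set V}}.

Definition irregularity S := \sum_x ((#|star S x| - r) + (r - #|star S x|)).

Lemma irregularity_exchange S u v : #|star S u| < r < #|star S v| ->
  exists S', [/\ #|S'| = #|S|, \sum_x #|star S' x| = \sum_x #|star S x|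
               & irregularity S' < irregularity S].
Proof.
case/andP => lt_ur lt_rv.
have neq_vu : v != u by apply/eqP => eq_vu; move: lt_ur lt_rv; rewrite eq_vu; lia.
have [S' card_S' deg_S'] := exchange_step (ltn_trans lt_ur lt_rv).
exists S'; split=> //; first exact: sum_nat_eq_shift deg_S'.
apply: (ltn_sum (j := v)) => [x|].
  have := deg_S' x; have [-> | _] := eqVneq x v; first by rewrite (negbTE neq_vu); lia.
  by have [-> | _] := eqVneq x u; lia.
by have := deg_S' v; rewrite eqxx (negbTE neq_vu); lia.
Qed.

Lemma irregularity_augment S v : 2 * r <= #|S|.+1 ->
  (forall x, #|star S x| <= r) -> #|star S v| < r ->
  exists S', [/\ #|S'| = #|S|, forall x, #|star S' x| <= r
               & irregularity S' < irregularity S].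
Proof.
move=> le_rS le_r lt_vr.
have [|S' card_S' deg_S'] := @augment_step _ S v; first lia.
exists S'; split=> // [x|].
  by rewrite deg_S'; have := le_r x; have [-> | _] := eqVneq x v; lia.
apply: (ltn_sum (j := v)) => [x|]; rewrite deg_S'; last by rewrite eqxx; lia.
by have := le_r x; have [-> | _] := eqVneq x v; lia.
Qed.

Lemma regular_family_exists S :
  2 * r <= #|S|.+1 -> \sum_x #|star S x| <= #|V| * r ->
  exists2 S' : {set {set V}}, #|S'| = #|S| & forall x, #|star S' x| = r.
Proof.
have sum_r : \sum_(x : V) r = #|V| * r by rewrite sum_nat_const.
have [m] := ubnP (irregularity S); elim: m S => // m IHm S lt_irr le_rS le_sum.
have recurse (S' : {set {set V}}) :
    #|S'| = #|S| -> \sum_x #|star S' x| <= #|V| * r ->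
    irregularity S' < irregularity S ->
    exists2 S'' : {set {set V}}, #|S''| = #|S| & forall x, #|star S'' x| = r.
  move=> card_S' le_sum' lt_irr'; rewrite -card_S'.
  by apply: IHm; rewrite ?card_S' //; lia.
have [v lt_rv | le_r] := pickP (fun v => r < #|star S v|).
  have [u lt_ur] : exists u, #|star S u| < r.
    apply/existsP; apply: contraLR le_sum => /existsPn ge_r; rewrite -ltnNge.
    by rewrite -sum_r; apply: (ltn_sum (j := v)) => // x; rewrite leqNgt ge_r.
  have /irregularity_exchange [S' [card_S' sum_S' lt_irr']] :
    #|star S u| < r < #|star S v| by rewrite lt_ur.
  by apply: (recurse S'); rewrite ?sum_S'.
have {}le_r x : #|star S x| <= r by rewrite leqNgt le_r.
have [v lt_vr | ge_r] := pickP (fun v => #|star S v| < r).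
  have [S' [card_S' le_r' lt_irr']] := irregularity_augment le_rS le_r lt_vr.
  by apply: (recurse S') => //; rewrite -sum_r leq_sum.
by exists S => // x; apply/eqP; rewrite eqn_leq le_r leqNgt ge_r.
Qed.

End Regularization.

Lemma dual_family_base n r (V : finType) (e : 'I_n -> {set V}) :
  injective e -> (forall v, #|[set x | v \in e x]| = r) ->
  is_base_Snr r [set [set x | v \in e x] | v : V].
Proof.
move=> inj_e card_r; split; first by move=> _ /imsetP [v _ ->].
apply/trivgP/subsetP => p /astabP fix_p; rewrite inE; apply/eqP/permP => x.
rewrite perm1; apply: inj_e; apply/setP => v.
have /setP/(_ (p x)) :=
  fix_p _ (imset_f (fun v => [set x | v \in e x]) (isT : v \in V)).
by rewrite /= mem_imset ?inE //; exact: perm_inj.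
Qed.

Lemma regular_family_base n r (V : finType) (S : {set {set V}}) :
  #|S| = n -> (forall v, #|star S v| = r) ->
  exists2 B : {set {set 'I_n}}, is_base_Snr r B & #|B| <= #|V|.
Proof.
move=> card_S reg_S; pose e (x : 'I_n) := enum_val (cast_ord (esym card_S) x).
have inj_e : injective e by move=> x y /enum_val_inj /cast_ord_inj.
exists [set [set x | v \in e x] | v : V]; last exact: leq_imset_card.
apply: dual_family_base => // v; rewrite -(card_imset _ inj_e) -(reg_S v).
apply: eq_card => X; rewrite inE; apply/imsetP/andP => [[x] | [SX vX]].
  by rewrite inE => vx ->; split=> //; exact: enum_valP.
exists (cast_ord card_S (enum_rank_in SX X));
  by rewrite ?inE /e cast_ordK enum_rankK_in.
Qed.

Lemma small_sets_family (V : finType) m : m <= 'C(#|V|, 2) ->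
  exists2 S : {set {set V}},
    #|S| = #|V| + m + 1 & \sum_(X in S) #|X| = #|V| + 2 * m.
Proof.
rewrite -card_draws => /subset_of_card [P sub_P card_P].
have size_P X : X \in P -> #|X| = 2 by move/(subsetP sub_P); rewrite inE => /eqP.
pose F1 := [set [set v] | v : V].
have card_F1 : #|F1| = #|V| by rewrite card_imset //; exact: set1_inj.
have disj : [disjoint F1 & P].
  apply/pred0P => X /=; apply/negP => /andP [/imsetP [v _ ->] /size_P].
  by rewrite cards1.
have F1P0 : set0 \notin F1 :|: P.
  rewrite !inE negb_or; apply/andP; split.
    by apply/imsetP => -[v _ /setP /(_ v)]; rewrite !inE eqxx.
  by apply/negP => /size_P; rewrite cards0.
exists (set0 |: (F1 :|: P)).
  rewrite cardsU1 F1P0 cardsU (disjoint_setI0 disj) cards0 subn0.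
  by rewrite card_F1 card_P; lia.
rewrite big_setU1 //= cards0 add0n (eq_bigl [predU F1 & P]) => [|X]; last first.
  by rewrite !inE.
rewrite bigU // (eq_bigr (fun=> 1)) => [|_ /imsetP [v _ ->]]; last exact: cards1.
by rewrite sum1_card card_F1 (eq_bigr (fun=> 2)) // sum_nat_const card_P mulnC.
Qed.

Lemma base_card_lower_bound n r (B : {set {set 'I_n}}) :
  is_base_Snr r B -> (2 * n - 2 + r) %/ (r + 1) <= #|B|.
Proof.
case=> card_r /star_inj_of_astab/separating_card_bound.
rewrite card_ord (eq_bigr (fun=> r)) // sum_nat_const => le_n.
by rewrite -ltnS ltn_divLR ?addn1 //; nia.
Qed.

Lemma base_size_bounds n r : 0 < n -> 0 < r -> r * (r + 1) <= 2 * n ->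
  let k := (2 * n - 2 + r) %/ (r + 1) in
  [/\ k < n, n - 1 - k <= 'C(k, 2), k + 2 * (n - 1 - k) <= k * r & 2 * r <= n.+1].
Proof.
move=> n_gt0 r_gt0 le_rn k.
have := divn_eq (2 * n - 2 + r) (r + 1); rewrite -/k.
have : (2 * n - 2 + r) %% (r + 1) < r + 1 by rewrite ltn_pmod // addn1.
move: (_ %% _) => t lt_t eq_k.
have lo : 2 * n - 2 <= k * (r + 1) by lia.
rewrite bin2 geq_half_double; split; [nia | | nia | nia].
have [le_rk | lt_kr] := leqP r k; first nia.
have : k * (r + 1) <= (r - 1) * (r + 1) by apply: leq_mul => //; lia.
nia.
Qed.

Theorem corollary3p3 (n r : nat) :
  0 < n -> 0 < r -> r * (r + 1) <= 2 * n ->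
  let k := (2 * n - 2 + r) %/ (r + 1) in
  (exists B : {set {set 'I_n}}, is_base_Snr r B /\ #|B| = k) /\
  (forall B : {set {set 'I_n}}, is_base_Snr r B -> k <= #|B|).
Proof.
move=> n_gt0 r_gt0 le_rn k.
have lower B : is_base_Snr r B -> k <= #|B| := @base_card_lower_bound n r B.
split=> //.
have [lt_kn le_pairs le_sum le_rn'] := base_size_bounds n_gt0 r_gt0 le_rn.
have [|S0 card_S0 sum_S0] := @small_sets_family 'I_k (n - 1 - k).
  by rewrite card_ord.
rewrite card_ord in card_S0 sum_S0.
have {}card_S0 : #|S0| = n by rewrite card_S0; lia.
have [S card_S reg_S] :
    exists2 S : {set {set 'I_k}}, #|S| = n & forall x, #|star S x| = r.
  rewrite -card_S0; apply: regular_family_exists; first by rewrite card_S0.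
  by rewrite sum_card_star sum_S0 card_ord.
have [B base_B le_Bk] := regular_family_base card_S reg_S.
by exists B; split=> //; apply/eqP; rewrite eqn_leq lower // -(card_ord k) le_Bk.
Qed.
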